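(* Let $T$ be a tree with positive edge weights rooted at the homebase $r$, and let $q\ge 0$. In every cost-optimal strategy exploring $T$, every agent terminates in a leaf of $T$ (its last visited vertex is a leaf), and every leaf is visited exactly once.
   Context: Exploration model: given a connected graph with positive edge weights, a homebase vertex, and invoking cost $q\ge 0$, a strategy is a sequence of moves, each either invoking a new agent (appearing at the homebase) or an agent traversing an edge incident to its current vertex. A vertex is explored when first visited; the strategy explores the graph when every vertex has been visited by some agent (agents need not return). With $k$ agents, agent $i$ traversing total distance $d_i$ (weights counted with multiplicity), the cost is $kq+\sum_i d_i$; a strategy is cost-optimal if it explores the graph with minimum cost (off-line setting). A leaf of the rooted tree is a non-root vertex with no children. *)

From mathcomp Require Import all_boot all_order all_algebra.
Set Implicit Arguments. Unset Strict Implicit. Unset Printing Implicit Defensive.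
Import Order.TTheory GRing.Theory Num.Theory.
Local Open Scope ring_scope.

(* ---------------- Rooted trees ----------------
   A tree rooted at the homebase r on the finite vertex set V is given by its
   parent map p : V -> V: p r = r and iterating p from any vertex reaches r.
   (Hence the graph with edges {v, p v}, v <> r, is a tree.)  The weight of
   the edge {v, p v} (v <> r) is w v. *)
Definition rooted_tree (V : finType) (r : V) (p : V -> V) : Prop :=
  p r = r /\ forall v : V, exists n : nat, iter n p v = r.

Definition is_child (V : finType) (r : V) (p : V -> V) (u v : V) : bool :=
  (v != r) && (p v == u).

Definition is_leaf (V : finType) (r : V) (p : V -> V) (v : V) : bool :=
  (v != r) && [forall u : V, ~~ is_child r p v u].

Definition adjacent (V : finType) (r : V) (p : V -> V) (u v : V) : bool :=
  is_child r p u v || is_child r p v u.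

Definition edge_weight (V : finType) (R : pzRingType) (r : V) (p : V -> V)
  (w : V -> R) (u v : V) : R :=
  if is_child r p u v then w v else w u.

(* Agents are numbered 0,1,2,... in the
   order in which they are invoked.  [Invoke] invokes a new agent, which
   appears at the homebase r; [Traverse i v] moves agent i along the edge
   from its current vertex to the adjacent vertex v. *)
Inductive move (V : Type) := Invoke | Traverse of nat & V.
Arguments Invoke {V}.

(* [pos] lists the current positions of the agents invoked so far. *)
Definition legal (V : finType) (r : V) (p : V -> V) (pos : seq V) (m : move V)
  : bool :=
  match m with
  | Invoke => true
  | Traverse i v => (i < size pos)%N && adjacent r p (nth r pos i) v
  end.

Definition step (V : finType) (r : V) (pos : seq V) (m : move V) : seq V :=
  match m with
  | Invoke => rcons pos r
  | Traverse i v => set_nth r pos i v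
  end.

Fixpoint valid (V : finType) (r : V) (p : V -> V) (pos : seq V)
  (s : seq (move V)) : bool :=
  match s with
  | [::] => true
  | m :: s' => legal r p pos m && valid r p (step r pos m) s'
  end.

(* The list of all visits (agent, vertex arrived at), in chronological order;
   an invoked agent visits the homebase when it appears. *)
Fixpoint arrivals (V : finType) (r : V) (pos : seq V) (s : seq (move V))
  : seq (nat * V) :=
  match s with
  | [::] => [::]
  | m :: s' =>
      (match m with
       | Invoke => (size pos, r)
       | Traverse i v => (i, v)
       end) :: arrivals r (step r pos m) s'
  end.

Definition final_positions (V : finType) (r : V) (s : seq (move V)) : seq V :=
  foldl (step r) [::] s.

Definition is_invoke (V : Type) (m : move V) : bool :=
  if m is Invoke then true else false.

Definition num_agents (V : Type) (s : seq (move V)) : nat := count (@is_invoke V) s.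

Definition never_moves (V : Type) (i : nat) (s : seq (move V)) : bool :=
  all (fun m => if m is Traverse j _ then j != i else true) s.

Fixpoint travel (V : finType) (R : pzRingType) (r : V) (p : V -> V) (w : V -> R)
  (pos : seq V) (s : seq (move V)) : R :=
  match s with
  | [::] => 0
  | m :: s' =>
      (if m is Traverse i v then edge_weight r p w (nth r pos i) v else 0)
      + travel r p w (step r pos m) s'
  end.

Definition cost (V : finType) (R : pzRingType) (r : V) (p : V -> V) (w : V -> R)
  (q : R) (s : seq (move V)) : R :=
  (num_agents s)%:R * q + travel r p w [::] s.

Definition explores (V : finType) (r : V) (p : V -> V) (s : seq (move V)) : Prop :=
  valid r p [::] s /\ forall v : V, v \in map snd (arrivals r [::] s).

Definition cost_optimal (V : finType) (R : numDomainType) (r : V) (p : V -> V)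
  (w : V -> R) (q : R) (s : seq (move V)) : Prop :=
  explores r p s /\
  forall s' : seq (move V), explores r p s' -> cost r p w q s <= cost r p w q s'.

(* Each claim is proved by turning a violating strategy into a cheaper one that
   still explores the tree. An agent that never moves can be dropped, saving q,
   unless the tree is a single vertex (otherwise what remains is nonempty, so
   it still starts by invoking an agent at the homebase). The last move of an
   agent, to v, can be deleted, saving a positive weight, unless it is the only
   visit of v; then v is a leaf, for the first agent to reach a child of v must
   have visited v, hence is this agent, which does not move afterwards and so
   would have visited v earlier. Finally, a second visit of a leaf v comes from
   p v; the agent making it either stops there (delete the move) or next walks
   back to p v (delete both moves). *)

From Pilot Require Import Defs.
From mathcomp Require Import all_boot all_order all_algebra.
From mathcomp Require Import zify lra.
Set Implicit Arguments. Unset Strict Implicit. Unset Printing Implicit Defensive.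
Import Order.TTheory GRing.Theory Num.Theory.

Lemma size_set_nth_lt (T : Type) (x0 : T) (s : seq T) n y :
  n < size s -> size (set_nth x0 s n y) = size s.
Proof. by move=> lt_n; rewrite size_set_nth; apply/maxn_idPr. Qed.

Section MoveSequences.
Variable V : Type.
Implicit Types (s t : seq (move V)) (i : nat).

Lemma never_moves_cat i s t : never_moves i (s ++ t) = never_moves i s && never_moves i t.
Proof. exact: all_cat. Qed.

Lemma idle_or_last_traverse i s :
  never_moves i s \/ exists s1 v s2, s = s1 ++ Traverse i v :: s2 /\ never_moves i s2.
Proof.
elim: s => [|m s [idle|[s1 [v [s2 [-> idle]]]]]]; first by left.
- case: m => [|k x]; first by left.
  have [->|/eqP ne_ki] := k =P i; first by right; exists [::], x, s.
  by left; rewrite /never_moves /= ne_ki.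
- by right; exists (m :: s1), v, s2.
Qed.

Lemma first_traverse i s :
  ~~ never_moves i s -> exists t1 y t2, s = t1 ++ Traverse i y :: t2 /\ never_moves i t1.
Proof.
elim: s => [|m s IH] //; case: m => [|k x].
  by move/IH=> [t1 [y [t2 [-> idle]]]]; exists (Invoke :: t1), y, t2.
have [->|/eqP ne_ki] := k =P i; first by exists [::], x, s.
rewrite /never_moves /= ne_ki => /IH [t1 [y [t2 [-> idle]]]].
by exists (Traverse k x :: t1), y, t2; rewrite /never_moves /= ne_ki.
Qed.

Lemma nth_invoke_split i s :
  i < num_agents s -> exists s1 s2, s = s1 ++ Invoke :: s2 /\ num_agents s1 = i.
Proof.
elim: s i => [|m s IH] i //; case: m => [|k x].
  case: i => [|i]; first by exists [::], s.
  by move/IH=> [s1 [s2 [-> <-]]]; exists (Invoke :: s1), s2.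
by move/IH=> [s1 [s2 [-> <-]]]; exists (Traverse k x :: s1), s2.
Qed.

End MoveSequences.

Section Runs.
Variables (V : finType) (r : V) (p : V -> V).
Local Notation run := (foldl (step r)).

Lemma valid_cat pos s1 s2 :
  valid r p pos (s1 ++ s2) = valid r p pos s1 && valid r p (run pos s1) s2.
Proof. by elim: s1 pos => [|m s1 IH] pos //=; rewrite IH andbA. Qed.

Lemma arrivals_cat pos s1 s2 :
  arrivals r pos (s1 ++ s2) = arrivals r pos s1 ++ arrivals r (run pos s1) s2.
Proof. by elim: s1 pos => [|m s1 IH] pos //=; rewrite IH. Qed.

Lemma travel_cat (R : pzRingType) (w : V -> R) pos s1 s2 :
  travel r p w pos (s1 ++ s2) = (travel r p w pos s1 + travel r p w (run pos s1) s2)%R.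
Proof. by elim: s1 pos => [|m s1 IH] pos /=; rewrite ?add0r // IH addrA. Qed.

Lemma num_agents_cat (s1 s2 : seq (move V)) :
  num_agents (s1 ++ s2) = num_agents s1 + num_agents s2.
Proof. exact: count_cat. Qed.

Lemma size_step pos m :
  legal r p pos m -> size (step r pos m) = size pos + is_invoke m.
Proof.
case: m => [|k x] /=; first by rewrite size_rcons addn1.
by case/andP=> lt_k _; rewrite size_set_nth_lt ?addn0.
Qed.

Lemma size_run pos s : valid r p pos s -> size (run pos s) = size pos + num_agents s.
Proof.
elim: s pos => [|m s IH] pos /=; first by rewrite addn0.
case/andP=> legal_m valid_s; rewrite IH // size_step // /num_agents /=; lia.
Qed.

Lemma root_visited s : valid r p [::] s -> 0 < size s -> r \in map snd (arrivals r [::] s).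
Proof. by case: s => [|[|k x] s] //= _ _; rewrite mem_head. Qed.

Lemma run_positions_visited pos s (seen : seq V) :
  valid r p pos s -> {in gtn (size pos), forall j, nth r pos j \in seen} ->
  {in gtn (size (run pos s)), forall j,
     nth r (run pos s) j \in seen ++ map snd (arrivals r pos s)}.
Proof.
elim: s pos seen => [|m s IH] pos seen /=; first by rewrite cats0.
case/andP=> legal_m valid_s seen_pos.
rewrite -cat_rcons; apply: (IH _ _ valid_s) => {valid_s IH} j.
rewrite size_step // mem_rcons inE.
case: m legal_m => [|k x] /= legal_m; rewrite ?nth_rcons_default.
  rewrite addn1 inE ltnS leq_eqVlt => /orP[/eqP->|/seen_pos->]; last by rewrite orbT.
  by rewrite nth_default ?eqxx.
rewrite addn0 nth_set_nth /=.
by case: (j =P k) => [_|_ /seen_pos->]; rewrite ?eqxx ?orbT.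
Qed.

End Runs.

Section Visits.
Variables (V : finType) (r : V).

Lemma visit_split pos s v :
  v != r -> v \in map snd (arrivals r pos s) -> exists s1 i s2, s = s1 ++ Traverse i v :: s2.
Proof.
move=> ne_vr; elim: s pos => [|m s IH] pos //=; rewrite inE => /orP[/eqP|].
  by case: m => [eq_vr|k x ->]; [rewrite eq_vr eqxx in ne_vr | exists [::], k, s].
by move/IH=> [s1 [i [s2 ->]]]; exists (m :: s1), i, s2.
Qed.

Lemma second_visit_split pos s v :
  v != r -> 1 < count (fun a : nat * V => a.2 == v) (arrivals r pos s) ->
  exists s1 i s2, s = s1 ++ Traverse i v :: s2 /\ v \in map snd (arrivals r pos s1).
Proof.
move=> ne_vr; elim: s pos => [|m s IH] pos //=.
case: eqP => [head_v|_] /=; last first.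
  by move/IH=> [s1 [i [s2 [-> seen]]]]; exists (m :: s1), i, s2; rewrite inE seen orbT.
rewrite add1n ltnS -has_count => /hasP [a a_in /eqP a_v].
have /(visit_split ne_vr) [s1 [i [s2 ->]]] : v \in map snd (arrivals r (step r pos m) s).
  by apply/mapP; exists a.
by exists (m :: s1), i, s2; rewrite /= inE head_v eqxx.
Qed.

End Visits.

Definition agree_except (V : Type) (r : V) (i : nat) (pos pos' : seq V) : Prop :=
  size pos = size pos' /\ forall j, j != i -> nth r pos j = nth r pos' j.

Definition unbump_move (V : Type) (i : nat) (m : move V) : move V :=
  if m is Traverse j x then Traverse (unbump i j) x else Invoke.

Definition agent_removed (V : Type) (r : V) (i : nat) (pos pos' : seq V) : Prop :=
  [/\ size pos = (size pos').+1, i <= size pos' &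
      forall j, nth r pos' j = nth r pos (bump i j)].

Section IdleAgent.
Variables (V : finType) (r : V) (p : V -> V) (i : nat).
Local Notation run := (foldl (step r)).

Lemma run_idle_nth pos s : never_moves i s -> nth r (run pos s) i = nth r pos i.
Proof.
elim: s pos => [|m s IH] pos //= /andP[idle_m idle_s]; rewrite IH //.
case: m idle_m => [|j x] /=; first by rewrite nth_rcons_default.
by rewrite nth_set_nth /= eq_sym => /negbTE->.
Qed.

Lemma idle_arrival_root pos s x : never_moves i s -> (i, x) \in arrivals r pos s -> x = r.
Proof.
elim: s pos => [|m s IH] pos //= /andP[idle_m idle_s]; rewrite inE => /orP[/eqP|/IH]; last exact.
by case: m idle_m => [_ [_ ->]|j y /= ne_ji [eq_ji]] //; rewrite eq_ji eqxx in ne_ji.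
Qed.

Lemma agree_except_set_nth pos x :
  i < size pos -> agree_except r i (set_nth r pos i x) pos.
Proof.
by move=> lt_i; split=> [|j /negbTE ne_ji]; rewrite ?size_set_nth_lt // nth_set_nth /= ne_ji.
Qed.

Lemma agree_except_step pos pos' m :
  (if m is Traverse j _ then j != i else true) ->
  agree_except r i pos pos' -> agree_except r i (step r pos m) (step r pos' m).
Proof.
case: m => [|j x] /= ne_ji [eq_size eq_nth]; split.
- by rewrite !size_rcons eq_size.
- by move=> k ne_ki; rewrite !nth_rcons_default eq_nth.
- by rewrite !size_set_nth eq_size.
- by move=> k ne_ki; rewrite !nth_set_nth /=; case: eqP => // _; rewrite eq_nth.
Qed.

Lemma run_agree_except (R : pzRingType) (w : V -> R) pos pos' s :
  never_moves i s -> agree_except r i pos pos' ->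
  [/\ valid r p pos s = valid r p pos' s, travel r p w pos s = travel r p w pos' s,
      arrivals r pos s = arrivals r pos' s & agree_except r i (run pos s) (run pos' s)].
Proof.
elim: s pos pos' => [|m s IH] pos pos' //= /andP[idle_m idle_s] agree.
have [<- <- <- agree'] := IH _ _ idle_s (agree_except_step idle_m agree).
split=> //; clear agree'; case: agree idle_m => eq_size eq_nth.
all: by case: m => [|j x] //= ne_ji; rewrite ?eq_size ?eq_nth.
Qed.

Lemma set_nth_agree_except pos pos' :
  i < size pos' -> agree_except r i pos pos' -> set_nth r pos i (nth r pos' i) = pos'.
Proof.
move=> lt_i [eq_size eq_nth]; apply: (@eq_from_nth _ r).
  by rewrite size_set_nth_lt eq_size.
by move=> k _; rewrite nth_set_nth /=; case: eqP => [->|/eqP/eq_nth].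
Qed.

Lemma num_agents_unbump (s : seq (move V)) : num_agents (map (unbump_move i) s) = num_agents s.
Proof. by rewrite /num_agents count_map; apply: eq_count => -[]. Qed.

Lemma eq_unbump j k : j != i -> (k == unbump i j) = (bump i k == j).
Proof.
move=> ne_ji; have bumpK_j : bump i (unbump i j) = j by rewrite unbumpK // inE.
by rewrite -{2}bumpK_j (can_eq (bumpK i)).
Qed.

Lemma run_agent_removed (R : pzRingType) (w : V -> R) pos pos' s :
  never_moves i s -> agent_removed r i pos pos' -> valid r p pos s ->
  let s' := map (unbump_move i) s in
  [/\ valid r p pos' s', travel r p w pos s = travel r p w pos' s' &
      map snd (arrivals r pos s) = map snd (arrivals r pos' s')].
Proof.
elim: s pos pos' => [|m s IH] pos pos' //= /andP[idle_m idle_s] [eq_size le_i eq_nth].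
case/andP=> legal_m valid_s; case: m idle_m legal_m valid_s => [_ _|j x ne_ji] /=.
  move=> valid_s; suff removed : agent_removed r i (rcons pos r) (rcons pos' r).
    by have [-> -> ->] := IH _ _ idle_s removed valid_s.
  by split; rewrite ?size_rcons ?eq_size //; [lia | move=> k; rewrite !nth_rcons_default].
case/andP=> lt_j adj valid_s.
have lt_uj : unbump i j < size pos'.
  by move: lt_j ne_ji; rewrite eq_size /unbump; case: ltnP => ? /eqP ?; lia.
have nth_uj : nth r pos' (unbump i j) = nth r pos j by rewrite eq_nth unbumpK // inE.
suff removed : agent_removed r i (set_nth r pos j x) (set_nth r pos' (unbump i j) x).
  by have [-> -> ->] := IH _ _ idle_s removed valid_s; rewrite lt_uj nth_uj adj.
split; rewrite ?size_set_nth_lt // => k.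
by rewrite !nth_set_nth /= eq_unbump // eq_nth.
Qed.

End IdleAgent.

Definition arrival (V : Type) (r : V) (pos : seq V) (m : move V) : nat * V :=
  if m is Traverse i x then (i, x) else (size pos, r).

Definition in_subtree (V : Type) (p : V -> V) (v x : V) : Prop := exists n, iter n p x = v.

Definition subtree_visited (V : eqType) (r : V) (p : V -> V) (v : V)
    (pos : seq V) (h : seq (nat * V)) : Prop :=
  forall j, in_subtree p v (nth r pos j) -> (j, v) \in h.

Section Tree.
Variables (V : finType) (r : V) (p : V -> V).

Lemma adjacentC x y : adjacent r p x y = adjacent r p y x.
Proof. exact: orbC. Qed.

Lemma is_child_irrefl v : rooted_tree r p -> ~~ is_child r p v v.
Proof.
case=> p_r reach; apply/andP=> -[ne_vr /eqP p_v].
by have [n] := reach v; rewrite iter_fix // => eq_vr; rewrite eq_vr eqxx in ne_vr.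
Qed.

Lemma leaf_adjacent v x : is_leaf r p v -> adjacent r p x v -> x = p v.
Proof.
case/andP=> _ /forallP no_child /orP[/andP[_ /eqP->] //|child_x].
by have := no_child x; rewrite child_x.
Qed.

Variable v : V.
Hypotheses (p_r : p r = r) (ne_vr : v != r).

Lemma subtree_visited_nil : subtree_visited r p v [::] [::].
Proof.
by move=> j [n]; rewrite nth_nil iter_fix // => eq_rv; move: ne_vr; rewrite eq_rv eqxx.
Qed.

(* An agent can only enter the subtree of v through v itself. *)
Lemma subtree_visited_step pos h m :
  legal r p pos m -> subtree_visited r p v pos h ->
  subtree_visited r p v (step r pos m) (rcons h (arrival r pos m)).
Proof.
case: m => [|i x] /= legal_m visited j; rewrite mem_rcons inE.
  by rewrite nth_rcons_default => /visited->; rewrite orbT.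
rewrite nth_set_nth /=; case: eqP => [->|_ /visited->]; last by rewrite orbT.
have [->|ne_xv] := x =P v; first by rewrite eqxx.
move=> [[|n] iter_x]; first by case: ne_xv.
case/andP: legal_m => _ /orP[]/andP[ne_r /eqP p_eq]; apply/orP; right; apply: visited.
- by exists n; rewrite -p_eq -iterSr.
- by exists n.+2; rewrite iterSr p_eq.
Qed.

Lemma child_visit_parent_visit_run pos h s j c :
  valid r p pos s -> subtree_visited r p v pos h -> is_child r p v c ->
  (j, c) \in arrivals r pos s -> (j, v) \in h ++ arrivals r pos s.
Proof.
elim: s pos h => [|m s IH] pos h //= /andP[legal_m valid_s] visited child_c.
rewrite inE => /orP[/eqP arr_m|arr_s]; last first.
  by rewrite -cat_rcons; apply: IH => //; apply: subtree_visited_step.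
case/andP: child_c => ne_cr /eqP p_c.
case: m arr_m legal_m {valid_s} => [[_ eq_rc]|k x [<- <-]] /=.
  by rewrite -eq_rc eqxx in ne_cr.
case/andP=> _ /orP[]/andP[_ /eqP p_eq]; rewrite mem_cat visited //.
- by exists 0; rewrite -p_eq p_c.
- by exists 2; rewrite /= p_eq p_c.
Qed.

Lemma child_visit_parent_visit s j c :
  valid r p [::] s -> is_child r p v c ->
  (j, c) \in arrivals r [::] s -> (j, v) \in arrivals r [::] s.
Proof.
by move=> valid_s child_c /(child_visit_parent_visit_run valid_s subtree_visited_nil child_c).
Qed.

End Tree.

Local Open Scope ring_scope.

Section Shortcuts.
Variables (R : realDomainType) (V : finType) (r : V) (p : V -> V) (w : V -> R) (q : R).
Hypothesis w_gt0 : forall v, v != r -> 0 < w v.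
Local Notation run := (foldl (step r)).
Local Notation cost := (cost r p w q).
Local Notation visited pos s := (map snd (arrivals r pos s)).

Lemma edge_weight_gt0 x y : adjacent r p x y -> 0 < edge_weight r p w x y.
Proof.
rewrite /edge_weight /adjacent; case: ifP => [/andP[ne_yr _] _|_ /andP[ne_xr _]]; exact: w_gt0.
Qed.

Lemma drop_idle_agent s1 s2 x :
  explores r p (s1 ++ Invoke :: s2) -> never_moves (num_agents s1) s2 -> x != r ->
  exists2 s', explores r p s' & cost s' + q = cost (s1 ++ Invoke :: s2).
Proof.
set i := num_agents s1; set P := run [::] s1.
move=> [+ visits] idle ne_xr; rewrite valid_cat /= -/P => /andP[valid1 valid2].
have removed : agent_removed r i (rcons P r) P.
  have size_P : size P = i by rewrite (size_run valid1).
  split; rewrite ?size_rcons ?size_P // => j.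
  rewrite nth_rcons_default /bump; case: leqP => // le_ij.
  by rewrite !nth_default // size_P; lia.
have [valid2' travel2 visits2] := run_agent_removed w idle removed valid2.
exists (s1 ++ map (unbump_move i) s2); last first.
  rewrite /Defs.cost !num_agents_cat /= num_agents_unbump !travel_cat /= -/P travel2.
  rewrite !natrD !mulrDl; lra.
have valid' : valid r p [::] (s1 ++ map (unbump_move i) s2).
  by rewrite valid_cat; apply/andP; split.
have visited' y : y != r -> y \in visited [::] (s1 ++ map (unbump_move i) s2).
  move=> ne_yr; have := visits y; rewrite !arrivals_cat !map_cat !mem_cat -/P /= inE.
  by rewrite -visits2 (negbTE ne_yr).
split=> // y; have [->|/visited'] // := eqVneq y r; apply: (root_visited valid').
by have := visited' x ne_xr; case: (s1 ++ _).
Qed.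

Lemma drop_last_traverse s1 i v s2 :
  explores r p (s1 ++ Traverse i v :: s2) -> never_moves i s2 ->
  v \in visited [::] s1 ++ visited (set_nth r (run [::] s1) i v) s2 ->
  explores r p (s1 ++ s2) /\ cost (s1 ++ s2) < cost (s1 ++ Traverse i v :: s2).
Proof.
set P := run [::] s1; move=> [+ visits] idle seen_v.
rewrite valid_cat /= -/P => /andP[valid1 /andP[/andP[lt_i adj] valid2]].
have [eq_valid eq_travel eq_arrivals _] :=
  run_agree_except p w idle (agree_except_set_nth r v lt_i).
split; last first.
  rewrite /Defs.cost !num_agents_cat !travel_cat /= -/P eq_travel add0n.
  by have := edge_weight_gt0 adj; lra.
split=> [|y]; first by rewrite valid_cat valid1 -/P -eq_valid.
have := visits y; rewrite !arrivals_cat /= -/P !map_cat !mem_cat inE -eq_arrivals.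
by case/or3P=> [->|/eqP->|->]; rewrite ?orbT // -mem_cat.
Qed.

Lemma drop_round_trip s1 i v t1 y t2 :
  let s := s1 ++ Traverse i v :: t1 ++ Traverse i y :: t2 in
  explores r p s -> never_moves i t1 -> y = nth r (run [::] s1) i ->
  v \in visited [::] s1 ->
  explores r p (s1 ++ t1 ++ t2) /\ cost (s1 ++ t1 ++ t2) < cost s.
Proof.
set P := run [::] s1; set P1 := set_nth r P i v => s [+ visits] idle y_def seen_v.
rewrite valid_cat /= -/P => /andP[valid1 /andP[/andP[lt_i adj] +]].
have [eq_valid eq_travel eq_arrivals agree] :=
  run_agree_except p w idle (agree_except_set_nth r v lt_i).
set Q := run P1 t1; set Q' := run P t1.
rewrite valid_cat -/P1 -/Q /= => /andP[valid2 /andP[/andP[_ adj'] valid3]].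
have valid2' : valid r p P t1 by rewrite -eq_valid.
have back : set_nth r Q i y = Q'.
  rewrite y_def -(run_idle_nth r P idle) set_nth_agree_except //.
  by rewrite (size_run valid2') ltn_addr.
have seen_y : y \in visited [::] s1.
  by rewrite y_def; apply: (run_positions_visited (seen := [::]) valid1).
split; last first.
  rewrite /Defs.cost !num_agents_cat /= !num_agents_cat /= !travel_cat /= -/P -/P1.
  rewrite !travel_cat /= -/Q -/Q' -eq_travel back.
  by have := edge_weight_gt0 adj; have := edge_weight_gt0 adj'; rewrite !add0n; lra.
split=> [|x].
  by rewrite valid_cat valid1 -/P valid_cat -eq_valid valid2 -/Q' -back.
have := visits x; rewrite !arrivals_cat /= arrivals_cat /= -/P -/P1 -/Q -/Q' -back.
rewrite -eq_arrivals !map_cat /= !mem_cat !inE map_cat mem_cat /= inE.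
by case/orP=> [->|/orP[/eqP->|/orP[->|/orP[/eqP->|->]]]]; rewrite ?seen_v ?seen_y ?orbT.
Qed.

End Shortcuts.

Section Optimal.
Variables (R : realDomainType) (V : finType) (r : V) (p : V -> V) (w : V -> R) (q : R).
Variable s : seq (move V).
Hypotheses (tree : rooted_tree r p) (w_gt0 : forall v, v != r -> 0 < w v).
Hypothesis s_opt : cost_optimal r p w q s.
Local Notation run := (foldl (step r)).
Local Notation visited pos s := (map snd (arrivals r pos s)).

Lemma no_cheaper_exploration s' :
  ~ (explores r p s' /\ cost r p w q s' < cost r p w q s).
Proof. by case: s_opt => _ opt [/opt]; rewrite leNgt => /negP. Qed.

Lemma optimal_idle_agent i :
  0 <= q -> (i < num_agents s)%N -> never_moves i s -> q = 0 \/ #|V| = 1%N.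
Proof.
rewrite le0r => /orP[/eqP-> _ _|q_gt0 lt_i idle]; [by left | right].
case: (pickP (fun x => x != r)) => [x ne_xr|all_r]; last first.
  by apply: (@eq_card1 _ r) => x; rewrite !inE; have /negbFE-> := all_r x.
exfalso.
have [s1 [s2 [s_def i_def]]] := nth_invoke_split lt_i; subst i.
have [explores_s _] := s_opt.
move: idle explores_s; rewrite s_def never_moves_cat /= => /andP[_ idle2] explores_s.
have [s' explores_s' cost_s'] := drop_idle_agent w q explores_s idle2 ne_xr.
by apply: (@no_cheaper_exploration s'); rewrite s_def -cost_s' ltrDl.
Qed.

Lemma optimal_last_traverse_leaf s1 i v s2 :
  s = s1 ++ Traverse i v :: s2 -> never_moves i s2 -> is_leaf r p v.
Proof.
move=> s_def idle; have [[valid_s visits] _] := s_opt.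
set P := run [::] s1; set arrivals2 := arrivals r (set_nth r P i v) s2.
have arrivals_s : arrivals r [::] s = arrivals r [::] s1 ++ (i, v) :: arrivals2.
  by rewrite s_def arrivals_cat.
move: (valid_s); rewrite s_def valid_cat /= -/P => /andP[valid1 /andP[/andP[lt_i _] _]].
have : v \notin visited [::] s1 ++ map snd arrivals2.
  apply/negP=> seen_v; apply: (@no_cheaper_exploration (s1 ++ s2)); rewrite s_def.
  by apply: (drop_last_traverse q w_gt0) => //; rewrite -s_def; case: s_opt.
rewrite mem_cat negb_or => /andP[/negbTE unseen1 /negbTE unseen2].
have ne_vr : v != r.
  apply: contraFneq unseen1 => ->; apply: (root_visited valid1).
  by move: lt_i; rewrite (size_run valid1); case: (s1).
apply/andP; split=> //; apply/forallP=> c; apply/negP=> child_c.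
have [[j c'] arr_c /= c_def] := mapP (visits c); rewrite -{c'}c_def in arr_c.
have := child_visit_parent_visit tree.1 ne_vr valid_s child_c arr_c.
rewrite arrivals_s mem_cat inE => /or3P[/(map_f snd)|/eqP[j_def]|/(map_f snd)] /=.
- by rewrite unseen1.
- move: arr_c; rewrite arrivals_s j_def mem_cat inE => /or3P[|/eqP[eq_cv]|].
  + move/(child_visit_parent_visit tree.1 ne_vr valid1 child_c)/(map_f snd).
    by rewrite unseen1.
  + by rewrite eq_cv (negbTE (is_child_irrefl v tree)) in child_c.
  + by move/(idle_arrival_root idle) => eq_cr; case/andP: child_c; rewrite eq_cr eqxx.
- by rewrite unseen2.
Qed.

Lemma optimal_final_position i :
  0 <= q -> (i < num_agents s)%N ->
  is_leaf r p (nth r (final_positions r s) i) \/ ((q = 0 \/ #|V| = 1%N) /\ never_moves i s).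
Proof.
move=> q_ge0 lt_i; have [idle|[s1 [v [s2 [s_def idle]]]]] := idle_or_last_traverse i s.
  by right; split=> //; exact: (optimal_idle_agent q_ge0 lt_i idle).
left; rewrite /final_positions s_def foldl_cat /= run_idle_nth // nth_set_nth /= eqxx.
exact: optimal_last_traverse_leaf s_def idle.
Qed.

Lemma optimal_leaf_visited_once v :
  is_leaf r p v -> count (fun a : nat * V => a.2 == v) (arrivals r [::] s) = 1%N.
Proof.
move=> leaf_v; have [[valid_s visits] _] := s_opt.
have ne_vr : v != r by case/andP: leaf_v.
apply/eqP; rewrite eqn_leq -has_count andbC; apply/andP; split.
  by have /mapP[a a_in a_v] := visits v; apply/hasP; exists a; rewrite // -a_v.
rewrite leqNgt; apply/negP => /(second_visit_split ne_vr) [s1 [i [s2 [s_def seen_v]]]].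
set P := run [::] s1.
move: valid_s; rewrite s_def valid_cat /= -/P => /andP[_ /andP[/andP[_ adj] valid2]].
have [idle|/first_traverse [t1 [y [t2 [s2_def idle]]]]] := boolP (never_moves i s2).
  apply: (@no_cheaper_exploration (s1 ++ s2)); rewrite s_def.
  apply: (drop_last_traverse q w_gt0) => //; last by rewrite mem_cat seen_v.
  by rewrite -s_def; case: s_opt.
have y_def : y = nth r P i.
  move: valid2; rewrite s2_def valid_cat /= run_idle_nth // nth_set_nth /= eqxx.
  case/andP=> _ /andP[/andP[_ adj'] _].
  by rewrite (leaf_adjacent leaf_v adj) (leaf_adjacent leaf_v (_ : adjacent r p y v)) // adjacentC.
apply: (@no_cheaper_exploration (s1 ++ t1 ++ t2)); rewrite s_def s2_def.
by apply: (drop_round_trip q w_gt0) => //; rewrite -s2_def -s_def; case: s_opt.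
Qed.

End Optimal.

Theorem mainTheorem7 (R : realFieldType) (V : finType) (r : V) (p : V -> V)
  (w : V -> R) (q : R) (s : seq (move V)) :
  rooted_tree r p ->
  (forall v : V, v != r -> 0 < w v) ->
  0 <= q ->
  cost_optimal r p w q s ->
  (forall i : nat, (i < num_agents s)%N ->
     is_leaf r p (nth r (final_positions r s) i)
     \/ ((q = 0 \/ #|V| = 1%N) /\ never_moves i s))
  /\
  (forall v : V, is_leaf r p v ->
     count (fun a : nat * V => a.2 == v) (arrivals r [::] s) = 1%N).
Proof.
move=> tree w_gt0 q_ge0 s_opt; split=> [i|v].
- exact: (optimal_final_position tree w_gt0 s_opt q_ge0).
- exact: (optimal_leaf_visited_once w_gt0 s_opt).
Qed.
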